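(* Let $G'$ be an identifiable graph, $v$ a vertex of $G'$ and $S$ a $\Delta$-star with $\Delta\ge 3$, and let $G=G'\rhd_v S$. Then $G$ is identifiable and $\gamma^{\rm ID}(G) \le \gamma^{\rm ID}(G') + \Delta - 1$.
   Context: A graph is identifiable if it has no two distinct vertices with the same closed neighborhood $N[\cdot]$. An identifying code of $G$ is a set $C\subseteq V(G)$ such that every vertex $v$ has $N[v]\cap C\neq\emptyset$ and for all distinct $u,v$, $N[u]\cap C \ne N[v]\cap C$; $\gamma^{\rm ID}(G)$ is its minimum size. A $\Delta$-star is $K_{1,\Delta}$. For a graph $G'$, a vertex $v$ of $G'$ and a star $S$, $G'\rhd_v S$ is the graph obtained from the disjoint union of $G'$ and $S$ by identifying $v$ with a leaf of $S$. *)

From mathcomp Require Import all_boot.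
Set Implicit Arguments. Unset Strict Implicit. Unset Printing Implicit Defensive.

Section Defs.
Variable T : finType.
Implicit Types (e : rel T).

Definition simple_graph e : Prop := symmetric e /\ irreflexive e.

Definition cnbhd e (x : T) : {set T} := [set y | (y == x) || e x y].

Definition identifiable e : Prop :=
  forall x y : T, cnbhd e x = cnbhd e y -> x = y.

Definition is_idcode e (C : {set T}) : bool :=
  [forall x, cnbhd e x :&: C != set0] &&
  [forall x, forall y, (x != y) ==> (cnbhd e x :&: C != cnbhd e y :&: C)].

(* gamma^ID: minimum size of an identifying code (every code has size
   <= #|T|, so the default #|T| is only reached when no code exists,
   i.e. when the graph is not identifiable). *)
Definition gammaID e : nat :=
  \big[minn/#|T|]_(C : {set T} | is_idcode e C) #|C|.
End Defs.

(* G' |>_v S for S = K_{1,D}: vertices of G' plus the centre (inr None)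
   and the D-1 leaves of S other than the one identified with v
   (inr (Some i), i : 'I_(D-1)). *)
Definition star_attach (T : finType) (e : rel T) (v : T) (k : nat)
  : rel (T + option 'I_k) :=
  fun x y =>
    match x, y with
    | inl a, inl b => e a b
    | inl a, inr None => a == v
    | inr None, inl a => a == v
    | inr None, inr (Some _) => true
    | inr (Some _), inr None => true
    | _, _ => false
    end.
Arguments star_attach {T} e v k.

(** The [D - 1] new leaves of the star, which are adjacent only to its
    centre, together with a minimum identifying code [C] of [G'] identify
    [G' |>_v S]: a leaf is seen by itself alone, the centre (never put in the
    code) by all [D - 1 >= 2] leaves and possibly [v], and a vertex of [G'] by
    exactly the codewords of [C] it already saw in [G']. *)
From mathcomp Require Import all_boot.

Set Implicit Arguments.
Unset Strict Implicit.
Unset Printing Implicit Defensive.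

Section IdentifyingCodes.
Variables (T : finType) (e : rel T).

Lemma idcodeP (C : {set T}) :
  reflect ((forall x, cnbhd e x :&: C != set0) /\
           injective (fun x => cnbhd e x :&: C))
          (is_idcode e C).
Proof.
apply: (iffP andP) => [[/forallP dom /forallP sep] | [dom sep]]; split.
- exact: dom.
- move=> x y; apply: contra_eq; exact/implyP/(forallP (sep x)).
- exact/forallP.
- apply/forallP => x; apply/forallP => y; apply/implyP.
  exact/contra_neq/sep.
Qed.

Lemma identifiable_idcode (C : {set T}) : is_idcode e C -> identifiable e.
Proof. by case/idcodeP=> _ sep x y Nxy; apply: sep; rewrite /= Nxy. Qed.

Lemma idcodeT : identifiable e -> is_idcode e setT.
Proof.
move=> idf; apply/idcodeP.
split=> [x | x y /=]; rewrite !setIT; last exact: idf.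
by apply/set0Pn; exists x; rewrite !inE eqxx.
Qed.

Lemma gammaID_min (C : {set T}) : is_idcode e C -> gammaID e <= #|C|.
Proof.
move=> codeC; rewrite /gammaID.
have : C \in index_enum {set T} by rewrite mem_index_enum.
elim: (index_enum _) => [// | A s IHs]; rewrite big_cons inE.
case/orP=> [/eqP <- | /IHs]; first by rewrite codeC geq_minl.
by case: ifP => // _ le_s; rewrite geq_min le_s orbT.
Qed.

Lemma gammaID_attained :
  identifiable e -> exists2 C, is_idcode e C & #|C| = gammaID e.
Proof.
move=> idf.
have [C codeC leC] : exists2 C, is_idcode e C & #|C| <= gammaID e.
  apply: (big_ind (fun n => exists2 C, is_idcode e C & #|C| <= n)).
  - by exists setT; rewrite ?idcodeT ?cardsT.
  - move=> m n [A codeA leA] [B codeB leB].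
    by case: leqP => _; [exists A | exists B].
  - by move=> C codeC; exists C.
by exists C => //; apply/eqP; rewrite eqn_leq leC gammaID_min.
Qed.

End IdentifyingCodes.

Section StarAttach.
Variables (T : finType) (e : rel T) (v : T) (k : nat).

Local Notation G := (star_attach e v k).

Definition star_leaves : {set T + option 'I_k} := [set inr (Some i) | i : 'I_k].

Definition star_code (C : {set T}) : {set T + option 'I_k} :=
  inl @: C :|: star_leaves.

Lemma inl_inj : injective (@inl T (option 'I_k)).
Proof. by move=> a b []. Qed.

Lemma mem_inl_imset (A : {set T}) (z : T + option 'I_k) :
  (z \in inl @: A) = if z is inl a then a \in A else false.
Proof.
case: z => [a | o]; first by rewrite mem_imset //; apply: inl_inj.
by apply/imsetP => -[].
Qed.

Lemma mem_star_leaves (z : T + option 'I_k) :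
  (z \in star_leaves) = if z is inr (Some _) then true else false.
Proof.
by case: z => [a | [i |]]; apply/imsetP; [case | exists i | case].
Qed.

Lemma card_star_leaves : #|star_leaves| = k.
Proof. by rewrite card_imset ?card_ord // => i j [->]. Qed.

Lemma card_star_code (C : {set T}) : #|star_code C| = #|C| + k.
Proof.
rewrite cardsU card_imset; last exact: inl_inj.
rewrite card_star_leaves -[RHS]subn0; congr (_ - _); apply/eqP.
rewrite cards_eq0; apply/eqP/setP => z.
rewrite !inE mem_inl_imset mem_star_leaves.
by case: z => [? | []]; rewrite ?andbF.
Qed.

Variable C : {set T}.

Lemma star_trace_inl a :
  cnbhd G (inl a) :&: star_code C = inl @: (cnbhd e a :&: C).
Proof.
apply/setP => z; rewrite /cnbhd !inE !mem_inl_imset mem_star_leaves.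
by case: z => [b | [j |]]; rewrite ?inE ?(inj_eq inl_inj) ?orbF ?andbF.
Qed.

Lemma star_trace_leaf i :
  cnbhd G (inr (Some i)) :&: star_code C = [set inr (Some i)].
Proof.
apply/setP => z; rewrite /cnbhd !inE mem_inl_imset mem_star_leaves.
by case: z => [b | [j |]]; rewrite ?inE ?andbF ?orbF ?andbT.
Qed.

Lemma star_leaves_sub_trace_centre :
  star_leaves \subset cnbhd G (inr None) :&: star_code C.
Proof.
apply/subsetP => z; rewrite /cnbhd !inE mem_inl_imset mem_star_leaves.
by case: z => [// | [j |] //]; rewrite /= orbT.
Qed.

Lemma star_code_idcode : 1 < k -> is_idcode e C -> is_idcode G (star_code C).
Proof.
move=> k_gt1 /idcodeP[domC sepC].
have i0 : 'I_k := Ordinal (ltnW k_gt1).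
have leaf_inl (i : 'I_k) (A : {set T}) : inr (Some i) \notin inl @: A.
  by rewrite mem_inl_imset.
have leaf_centre i : inr (Some i) \in cnbhd G (inr None) :&: star_code C.
  by apply: subsetP star_leaves_sub_trace_centre _ _; rewrite mem_star_leaves.
have leaf_ne_centre i :
    [set inr (Some i)] != cnbhd G (inr None) :&: star_code C.
  apply/contraTneq: k_gt1 => E.
  have := subset_leq_card star_leaves_sub_trace_centre.
  by rewrite -E cards1 card_star_leaves ltnNge negbK.
apply/idcodeP; split.
- case=> [a | [i |]]; rewrite ?star_trace_inl ?star_trace_leaf.
  + by rewrite imset_eq0.
  + by apply/set0Pn; exists (inr (Some i)); rewrite set11.
  + by apply/set0Pn; exists (inr (Some i0)).
case=> [a | [i |]] [b | [j |]] /=;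
  rewrite ?star_trace_inl ?star_trace_leaf => E //.
- by rewrite (sepC a b (imset_inj inl_inj E)).
- by have := leaf_inl j (cnbhd e a :&: C); rewrite E set11.
- by have := leaf_inl i0 (cnbhd e a :&: C); rewrite E leaf_centre.
- by have := leaf_inl i (cnbhd e b :&: C); rewrite -E set11.
- by case: (set1_inj E) => ->.
- by have := leaf_ne_centre i; rewrite E eqxx.
- by have := leaf_inl i0 (cnbhd e b :&: C); rewrite -E leaf_centre.
- by have := leaf_ne_centre j; rewrite E eqxx.
Qed.

End StarAttach.

Theorem mainTheorem4 (T : finType) (e : rel T) (v : T) (D : nat) :
  simple_graph e -> identifiable e -> 3 <= D ->
  identifiable (star_attach e v D.-1) /\
  gammaID (star_attach e v D.-1) <= gammaID e + D - 1.
Proof.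
move=> _ idf D_ge3.
have k_gt1 : 1 < D.-1 by case: D D_ge3 => [|[|[|D]]].
have [C codeC <-] := gammaID_attained idf.
have code := star_code_idcode v k_gt1 codeC.
split; first exact: identifiable_idcode code.
apply: leq_trans (gammaID_min code) _.
by rewrite card_star_code -subn1 addnBA // (leq_trans _ D_ge3).
Qed.
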